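(* Let $p$ be a prime. If $p\equiv -1\pmod 6$ and $p-4$ is prime, then $\frac{p+1}{3}-1$ is a twin-4 rank. If $p\equiv 1\pmod 6$ and $p+4$ is prime, then $\frac{p-1}{3}+1$ is a twin-4 rank.
   Context: An odd integer $t\geq 3$ is called a twin-4 rank if $3t-2$ and $3t+2$ are both prime; an odd integer $t\geq 3$ that is not a twin-4 rank is called a non-rank. *)

From mathcomp Require Import all_boot.

(* An odd integer t >= 3 is a twin-4 rank if 3t-2 and 3t+2 are both prime.
   Ranks are positive, so nat suffices; 3*t - 2 is not truncated since t >= 3. *)
Definition twin4_rank (t : nat) : bool :=
  [&& odd t, 3 <= t, prime (3 * t - 2) & prime (3 * t + 2)].

From mathcomp Require Import all_boot.
From mathcomp Require Import zify.

(* Write p = 6k + 5 (resp. 6k + 1).  The candidate rank is then 2k + 1 in both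
   cases, and 3(2k+1) -/+ 2 are exactly 6k + 1 and 6k + 5, i.e. p - 4 and p
   (resp. p and p + 4).  Primality of p - 4 (resp. p) forces k >= 1, so the
   rank is at least 3. *)

Lemma twin4_rank_double_addn1 (k : nat) : 0 < k ->
  twin4_rank k.*2.+1 = prime (6 * k + 1) && prime (6 * k + 5).
Proof.
move=> k_gt0; rewrite /twin4_rank /= odd_double.
have -> : 3 * k.*2.+1 - 2 = 6 * k + 1 by lia.
have -> : 3 * k.*2.+1 + 2 = 6 * k + 5 by lia.
by have -> : 3 <= k.*2.+1 by lia.
Qed.

Lemma twin4_rank_mod6_5 (p : nat) : p %% 6 = 5 ->
  prime (p - 4) -> prime p -> twin4_rank ((p + 1) %/ 3 - 1).
Proof.
move=> p_mod6 pm4_prime p_prime; have p_eq := divn_eq p 6.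
have k_gt0 : 0 < p %/ 6.
  by case: (posnP (p %/ 6)) => // k0; move: pm4_prime; rewrite p_eq k0 p_mod6.
have -> : (p + 1) %/ 3 - 1 = (p %/ 6).*2.+1 by lia.
rewrite twin4_rank_double_addn1 //.
have -> : 6 * (p %/ 6) + 1 = p - 4 by lia.
have -> : 6 * (p %/ 6) + 5 = p by lia.
by rewrite pm4_prime p_prime.
Qed.

Lemma twin4_rank_mod6_1 (p : nat) : p %% 6 = 1 ->
  prime p -> prime (p + 4) -> twin4_rank ((p - 1) %/ 3 + 1).
Proof.
move=> p_mod6 p_prime pp4_prime; have p_eq := divn_eq p 6.
have k_gt0 : 0 < p %/ 6.
  by case: (posnP (p %/ 6)) => // k0; move: p_prime; rewrite p_eq k0 p_mod6.
have -> : (p - 1) %/ 3 + 1 = (p %/ 6).*2.+1 by lia.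
rewrite twin4_rank_double_addn1 //.
have -> : 6 * (p %/ 6) + 1 = p by lia.
have -> : 6 * (p %/ 6) + 5 = p + 4 by lia.
by rewrite p_prime pp4_prime.
Qed.

Theorem corollary2p3 (p : nat) (hp : prime p) :
  (p %% 6 = 5 -> prime (p - 4) -> twin4_rank ((p + 1) %/ 3 - 1)) /\
  (p %% 6 = 1 -> prime (p + 4) -> twin4_rank ((p - 1) %/ 3 + 1)).
Proof.
split => p_mod6 q_prime.
- exact: twin4_rank_mod6_5.
- exact: twin4_rank_mod6_1.
Qed.
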